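(* There is a function $F:\mathbb{N}\to\mathbb{R}_{\ge0}$ such that the following holds. Let $G=(V,E,c_V^G,c_E^G)$ and $H=(V,E,c_V^H,c_E^H)$ be two capacitated graphs on the same $n$-vertex graph $(V,E)$ such that every vertex capacity and every edge capacity of $G$ differs from the corresponding capacity of $H$ by at most $\xi$. Let $\mu_G,\mu_H$ be the fractional matchings returned by Rising-Tide on $G$ and $H$. Then for every edge $e\in E$, $|\mu_G(e)-\mu_H(e)|\le F(n)\xi$.
   Context: Capacitated graphs have nonnegative vertex capacities $c_V$ and edge capacities $c_E$; edges may include self-loops, and in $\sum_j\mu(i,j)$ a self-loop at $i$ counts once. A feasible fractional matching $\mu:E\to\mathbb{R}_{\ge0}$ satisfies $\mu(e)\le c_E(e)$ and $\sum_j\mu(i,j)\le c_V(i)$. Vertex $i$ is saturated if $\sum_j\mu(i,j)=c_V(i)$; edge $e$ is saturated if $\mu(e)=c_E(e)$. Rising-Tide: set $E'=\{e\in E:c_E(e)>0\}$ and $\mu\equiv0$; while $E'\ne\emptyset$: choose the maximum $\delta\ge0$ such that $\mu+\delta\mathbf{1}_{E'}$ is feasible, set $\mu\gets\mu+\delta\mathbf{1}_{E'}$, and remove from $E'$ every edge $(i,j)$ such that $i$, $j$, or $(i,j)$ is saturated; return $\mu$. *)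

From HB Require Import structures.
From mathcomp Require Import all_boot all_order all_algebra.
From mathcomp Require Import reals.
From Stdlib Require Import Relations.
Set Implicit Arguments. Unset Strict Implicit. Unset Printing Implicit Defensive.
Import Order.TTheory GRing.Theory Num.Theory.
Local Open Scope ring_scope.

(* A graph on vertex set 'I_n: a set E of pairs (i,j) with i <= j,
   each representing the unordered edge {i,j}; (i,i) is a self-loop. *)
Definition edge_set_ok (n : nat) (E : {set 'I_n * 'I_n}) : Prop :=
  forall e, e \in E -> (e.1 <= e.2)%N.

Section RisingTide.
Variables (R : realType) (n : nat) (E : {set 'I_n * 'I_n}).
Variables (cV : 'I_n -> R) (cE : 'I_n * 'I_n -> R).

(* sum_j mu(i,j); a self-loop at i counts once *)
Definition vload (mu : 'I_n * 'I_n -> R) (i : 'I_n) : R :=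
  \sum_(e in E | (e.1 == i) || (e.2 == i)) mu e.

Definition feasible (mu : 'I_n * 'I_n -> R) : Prop :=
  (forall e, e \in E -> 0 <= mu e /\ mu e <= cE e) /\
  (forall i, vload mu i <= cV i).

Definition vsat (mu : 'I_n * 'I_n -> R) (i : 'I_n) : bool := vload mu i == cV i.
Definition esat (mu : 'I_n * 'I_n -> R) (e : 'I_n * 'I_n) : bool := mu e == cE e.

Definition raise (mu : 'I_n * 'I_n -> R) (E' : {set 'I_n * 'I_n}) (d : R) :=
  fun e => mu e + (if e \in E' then d else 0).

Definition is_max_delta (mu : 'I_n * 'I_n -> R) (E' : {set 'I_n * 'I_n}) (d : R) : Prop :=
  0 <= d /\ feasible (raise mu E' d) /\
  (forall d', 0 <= d' -> feasible (raise mu E' d') -> d' <= d).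

Inductive rt_step :
  (('I_n * 'I_n -> R) * {set 'I_n * 'I_n}) ->
  (('I_n * 'I_n -> R) * {set 'I_n * 'I_n}) -> Prop :=
| RtStep mu E' d :
    E' != set0 ->
    is_max_delta mu E' d ->
    rt_step (mu, E')
      (raise mu E' d,
       [set e in E' | ~~ [|| vsat (raise mu E' d) e.1,
                            vsat (raise mu E' d) e.2 |
                            esat (raise mu E' d) e]]).

Definition rt_init : ('I_n * 'I_n -> R) * {set 'I_n * 'I_n} :=
  (fun _ => 0, [set e in E | 0 < cE e]).

Definition rising_tide (mu : 'I_n * 'I_n -> R) : Prop :=
  clos_refl_trans _ rt_step rt_init (mu, set0).

End RisingTide.

(* Rising-Tide keeps every active edge at a common level L and freezes an edge
   only when it is saturated or one of its endpoints becomes saturated; at that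
   moment the edge carries the largest value at that endpoint.  So in the output
   every edge is saturated or is a heaviest edge at a saturated endpoint.

   To compare the outputs mu (on G) and nu (on H), process the edges by
   increasing mu + nu.  If nu e < mu e and e is not saturated in H, let i be its
   saturated endpoint in H.  Every other edge f at i with nu f - mu f large has
   mu f + nu f < mu e + nu e, hence is already controlled; since i is saturated
   in H and only xi-oversaturated in G, the deficits nu f - mu f around i sum to
   at least -xi, which bounds mu e - nu e.  Each of the at most n^2 rounds of this
   induction multiplies the constant by n^2 and adds 1. *)

From HB Require Import structures.
From mathcomp Require Import all_boot all_order all_algebra.
From mathcomp Require Import reals lra.
Import Order.TTheory GRing.Theory Num.Theory.
Set Implicit Arguments. Unset Strict Implicit. Unset Printing Implicit Defensive.
Local Open Scope ring_scope.

Section RisingTideInvariant.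
Variables (R : realType) (n : nat) (E : {set 'I_n * 'I_n}).
Variables (cV : 'I_n -> R) (cE : 'I_n * 'I_n -> R).
Implicit Types (mu : 'I_n * 'I_n -> R) (A : {set 'I_n * 'I_n}) (d : R).
Implicit Types (e f : 'I_n * 'I_n) (i : 'I_n).

Definition incident i e : bool := (e.1 == i) || (e.2 == i).

Definition next_active mu A : {set 'I_n * 'I_n} :=
  [set e in A | ~~ [|| vsat E cV mu e.1, vsat E cV mu e.2 | esat cE mu e]].

Definition frozen mu A e : Prop :=
  mu e = cE e \/ exists i, [/\ incident i e, vload E mu i = cV i &
     forall f, f \in E -> incident i f -> f \notin A /\ mu f <= mu e].

Definition rt_inv mu A : Prop :=
  [/\ feasible E cV cE mu, A \subset E & exists L,
      (forall e, e \in A -> mu e = L) /\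
      (forall e, e \in E -> e \notin A -> mu e <= L /\ frozen mu A e)].

Lemma raise_in mu A d e : e \in A -> raise mu A d e = mu e + d.
Proof. by rewrite /raise => ->. Qed.

Lemma raise_out mu A d e : e \notin A -> raise mu A d e = mu e.
Proof. by rewrite /raise => /negbTE ->; rewrite addr0. Qed.

Lemma vload_raise_out mu A d i :
    (forall f, f \in E -> incident i f -> f \notin A) ->
  vload E (raise mu A d) i = vload E mu i.
Proof.
by move=> hout; apply: eq_bigr => f /andP[hf hi]; rewrite raise_out ?hout.
Qed.

Lemma next_active_sub mu A : next_active mu A \subset A.
Proof. by apply/subsetP => e; rewrite inE => /andP[]. Qed.

Lemma next_active_vsat mu A i f :
  incident i f -> vsat E cV mu i -> f \notin next_active mu A.
Proof.
by move=> /orP[] /eqP <- hsat; rewrite inE hsat ?orbT andbF.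
Qed.

Lemma frozen_raise mu A A' d e : A' \subset A -> e \notin A ->
  frozen mu A e -> frozen (raise mu A d) A' e.
Proof.
move=> sA' heA [hsat|[i [hi hload hmax]]]; first by left; rewrite raise_out.
right; exists i; split => //.
  by rewrite vload_raise_out // => f hf hfi; case: (hmax f hf hfi).
move=> f hf hfi; have [hfA hle] := hmax f hf hfi.
split; first by apply: contra hfA; apply: (subsetP sA').
by rewrite !raise_out.
Qed.

Lemma frozen_next_active mu A e : e \in A -> e \notin next_active mu A ->
  (forall f, f \in E -> mu f <= mu e) -> frozen mu (next_active mu A) e.
Proof.
move=> heA; rewrite inE heA negbK /= => hsat hmax.
have at_endpoint i : incident i e -> vsat E cV mu i -> frozen mu (next_active mu A) e.
  move=> hi /[dup] hvi /eqP hload; right; exists i; split => // f hf hfi.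
  by split; [exact: next_active_vsat hvi | exact: hmax].
case/or3P: hsat => [|| /eqP]; last by left.
- by apply: at_endpoint; rewrite /incident eqxx.
- by apply: at_endpoint; rewrite /incident eqxx orbT.
Qed.

Lemma rt_inv_step s s' : rt_step E cV cE s s' -> rt_inv s.1 s.2 -> rt_inv s'.1 s'.2.
Proof.
case=> mu A d _ [d0 [hfeas _]] /= [_ sAE [L [hact hfro]]].
rewrite -/(next_active _ A); set mu' := raise mu A d.
have sA'A := next_active_sub mu' A.
have active e : e \in A -> mu' e = L + d by move=> heA; rewrite /mu' raise_in ?hact.
have below e : e \in E -> mu' e <= L + d.
  move=> he; case: (boolP (e \in A)) => heA; first by rewrite active.
  by rewrite /mu' raise_out //; have [+ _] := hfro e he heA; lra.
split=> //; first exact: subset_trans sAE.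
exists (L + d); split=> [e /(subsetP sA'A) /active // | e he heA'].
split; first exact: below.
case: (boolP (e \in A)) => heA.
  by apply: frozen_next_active => // f hf; rewrite (active e) //; apply: below.
by apply: frozen_raise => //; have [_] := hfro e he heA.
Qed.

Lemma rt_inv_init :
  (forall i, 0 <= cV i) -> (forall e, e \in E -> 0 <= cE e) ->
  rt_inv (rt_init E cE).1 (rt_init E cE).2.
Proof.
move=> hcV hcE; split=> /=.
- split=> [e he|i]; first by split=> //; exact: hcE.
  by rewrite /vload big1 ?hcV.
- by apply/subsetP => e; rewrite inE => /andP[].
exists 0; split=> // e he; rewrite inE he /= -leNgt => hle; split=> //.
by left; apply/eqP; rewrite eq_le hle hcE.
Qed.

Lemma rt_inv_reachable s s' :
  Relation_Operators.clos_refl_trans _ (rt_step E cV cE) s s' ->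
  rt_inv s.1 s.2 -> rt_inv s'.1 s'.2.
Proof. by elim=> [? ? /rt_inv_step | // | ? ? ? _ IH1 _ IH2 /IH1 /IH2]. Qed.

Lemma rising_tide_frozen mu :
  (forall i, 0 <= cV i) -> (forall e, e \in E -> 0 <= cE e) ->
  rising_tide E cV cE mu ->
  feasible E cV cE mu /\ forall e, e \in E -> frozen mu set0 e.
Proof.
move=> hcV hcE /rt_inv_reachable /(_ (rt_inv_init hcV hcE)) /= [hfeas _ [L [_ hfro]]].
by split=> // e he; have [] := hfro e he (negbT (in_set0 e)).
Qed.

End RisingTideInvariant.

Lemma ler_sum_card (R : numDomainType) (T : finType) (P : pred T) (F : T -> R) c :
  0 <= c -> (forall x, P x -> F x <= c) -> \sum_(x | P x) F x <= #|T|%:R * c.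
Proof.
move=> c0 hF; apply: le_trans (ler_sum _ hF) _.
by rewrite sumr_const mulr_natl; apply: ler_wpMn2l => //; apply: max_card.
Qed.

Section Stability.
Variables (R : realType) (n : nat) (E : {set 'I_n * 'I_n}).

Definition sum_rank (mu nu : 'I_n * 'I_n -> R) e :=
  #|[set g in E | mu g + nu g < mu e + nu e]|.

Lemma sum_rankC mu nu e : sum_rank mu nu e = sum_rank nu mu e.
Proof. by apply: eq_card => g; rewrite !inE (addrC (mu g)) (addrC (mu e)). Qed.

Lemma sum_rank_lt mu nu e f : f \in E ->
  mu f + nu f < mu e + nu e -> (sum_rank mu nu f < sum_rank mu nu e)%N.
Proof.
move=> hf hlt; apply: proper_card; apply/properP; split.
  by apply/subsetP => g; rewrite !inE => /andP[-> /lt_trans]; apply.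
by exists f; rewrite !inE ?hf ?hlt ?ltxx.
Qed.

Variables (cVG cVH : 'I_n -> R) (cEG cEH : 'I_n * 'I_n -> R) (xi : R).
Hypothesis hV : forall i, `|cVG i - cVH i| <= xi.
Hypothesis hE : forall e, e \in E -> `|cEG e - cEH e| <= xi.

Lemma incident_deficit_ge mu nu i : feasible E cVG cEG mu ->
  vload E nu i = cVH i -> - xi <= \sum_(f in E | incident i f) (nu f - mu f).
Proof.
move=> [_ hload] hsat; rewrite sumrB -/(vload E nu i) -/(vload E mu i) hsat.
by have := hload i; have /ler_normlP[] := hV i; lra.
Qed.

Lemma sum_rank_step (C : R) (mu nu : 'I_n * 'I_n -> R) k :
  0 <= xi -> 0 <= C ->
  feasible E cVG cEG mu -> (forall e, e \in E -> frozen E cVH cEH nu set0 e) ->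
  (forall f, f \in E -> (sum_rank mu nu f < k)%N -> `|mu f - nu f| <= C * xi) ->
  forall e, e \in E -> (sum_rank mu nu e <= k)%N ->
    mu e - nu e <= ((n * n)%:R * C + 1) * xi.
Proof.
move=> xi0 C0 hfeas hfro IH e he hk.
have Cxi0 : 0 <= C * xi by rewrite mulr_ge0.
have NCxi0 : 0 <= (n * n)%:R * C * xi by rewrite -mulrA mulr_ge0.
rewrite mulrDl mul1r.
case: (lerP (mu e) (nu e)) => [|hnu]; first lra.
case: (hfro e he) => [hsat | [i [hi hload hmax]]].
  have [_ hmu] := hfeas.1 e he; have /ler_normlP[] := hE he; lra.
have small f : f \in E -> incident i f -> f != e -> nu f - mu f <= C * xi.
  move=> hf hfi _; have [_ hnf] := hmax f hf hfi.
  rewrite leNgt; apply/negP => hbig.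
  have hlt : (sum_rank mu nu f < k)%N.
    by apply: leq_trans hk; apply: sum_rank_lt => //; lra.
  by have /ler_normlP[] := IH f hf hlt; lra.
have hrest : \sum_(f | (f \in E) && incident i f && (f != e)) (nu f - mu f)
    <= (n * n)%:R * C * xi.
  have -> : (n * n)%:R = #|{: 'I_n * 'I_n}|%:R :> R by rewrite card_prod !card_ord.
  rewrite -mulrA; apply: ler_sum_card => // f.
  by move=> /andP[/andP[hf hfi] hfe]; apply: small.
have := incident_deficit_ge hfeas hload.
rewrite (bigD1 e) /=; last by rewrite he hi.
move=> hdef; lra.
Qed.

End Stability.

Definition stab_const (R : realType) (n k : nat) : R :=
  iter k (fun c => (n * n)%:R * c + 1) 0.

Lemma stab_const_ge0 (R : realType) n k : 0 <= stab_const R n k.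
Proof. by elim: k => //= k IH; rewrite addr_ge0 // mulr_ge0. Qed.

Lemma rising_tide_stable_rank (R : realType) n (E : {set 'I_n * 'I_n})
    (cVG cVH : 'I_n -> R) (cEG cEH : 'I_n * 'I_n -> R) (xi : R) muG muH :
  0 <= xi ->
  (forall i, `|cVG i - cVH i| <= xi) ->
  (forall e, e \in E -> `|cEG e - cEH e| <= xi) ->
  feasible E cVG cEG muG -> (forall e, e \in E -> frozen E cVG cEG muG set0 e) ->
  feasible E cVH cEH muH -> (forall e, e \in E -> frozen E cVH cEH muH set0 e) ->
  forall k e, e \in E -> (sum_rank E muG muH e < k)%N ->
    `|muG e - muH e| <= stab_const R n k * xi.
Proof.
move=> xi0 hV hE fG bG fH bH.
have hV' i : `|cVH i - cVG i| <= xi by rewrite distrC.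
have hE' e : e \in E -> `|cEH e - cEG e| <= xi by rewrite distrC; apply: hE.
elim=> // k IH e he hk; rewrite ltnS in hk.
have C0 := stab_const_ge0 R n k.
have hGH := sum_rank_step hV hE xi0 C0 fG bH IH he hk.
have IH' f : f \in E -> (sum_rank E muH muG f < k)%N ->
    `|muH f - muG f| <= stab_const R n k * xi.
  by rewrite sum_rankC distrC; apply: IH.
have hHG := sum_rank_step hV' hE' xi0 C0 fH bG IH' he.
rewrite sum_rankC in hHG; have {}hHG := hHG hk.
by rewrite ler_norml /=; apply/andP; split; lra.
Qed.

Theorem lemma19 (R : realType) :
  exists F : nat -> R, (forall m, 0 <= F m) /\
  forall (n : nat) (E : {set 'I_n * 'I_n})
         (cVG cVH : 'I_n -> R) (cEG cEH : 'I_n * 'I_n -> R) (xi : R)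
         (muG muH : 'I_n * 'I_n -> R),
    edge_set_ok E ->
    (forall i, 0 <= cVG i) -> (forall i, 0 <= cVH i) ->
    (forall e, e \in E -> 0 <= cEG e) -> (forall e, e \in E -> 0 <= cEH e) ->
    (forall i, `|cVG i - cVH i| <= xi) ->
    (forall e, e \in E -> `|cEG e - cEH e| <= xi) ->
    rising_tide E cVG cEG muG ->
    rising_tide E cVH cEH muH ->
    forall e, e \in E -> `|muG e - muH e| <= F n * xi.
Proof.
exists (fun n => stab_const R n (n * n).+1); split=> [m|]; first exact: stab_const_ge0.
move=> n E cVG cVH cEG cEH xi muG muH _ hcVG hcVH hcEG hcEH hV hE hG hH e he.
have xi0 : 0 <= xi by apply: le_trans (hV e.1).
have [fG bG] := rising_tide_frozen hcVG hcEG hG.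
have [fH bH] := rising_tide_frozen hcVH hcEH hH.
apply: (rising_tide_stable_rank xi0 hV hE fG bG fH bH) => //.
by rewrite ltnS (leq_trans (max_card _)) // card_prod !card_ord.
Qed.
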